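(* Suppose a closed $n$-braid $\beta$ can be represented by a braid word containing a factor $\sigma_i^{-1}$ but no factor $\sigma_i$, for some $i\in\{1,\dots,n-1\}$. Then $\kappa(\beta)=2$.
   Context: Work over $\mathbb{Z}/2$ with the Khovanov chain complex $\mathrm{CKh}$ of a link diagram (cube of resolutions, circles labeled $v_\pm$, Khovanov's merge/split differential). For $\beta\in B_n$ with closure $\bar\beta$ drawn around the braid axis, a circle in a resolution is nontrivial if it winds an odd number of times around the axis, trivial otherwise. The $k$-grading of a canonical generator is (number of nontrivial circles labeled $v_+$) minus (number of nontrivial circles labeled $v_-$); the differential does not increase $k$, so $\mathcal{F}_i=\mathrm{span}\{x:k(x)\le i\}$ are subcomplexes. The braidlike resolution ($0$-resolve positive, $1$-resolve negative crossings) has $n$ nontrivial circles; $\psi(\bar\beta)$ labels all of them $v_-$. Define $\kappa(\beta)=n+\min\{i:\psi(\bar\beta)=dy,\ y\in\mathcal{F}_i\}$ if $\psi(\bar\beta)$ is a boundary, $\kappa(\beta)=\infty$ otherwise. *)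

From HB Require Import structures.
From mathcomp Require Import all_boot all_order all_algebra.
Set Implicit Arguments.
Unset Strict Implicit.
Unset Printing Implicit Defensive.
Import Order.TTheory GRing.Theory Num.Theory.
Local Open Scope ring_scope.

(* A braid word on n strands: a letter (j, true) is sigma_(j+1),
   a letter (j, false) is sigma_(j+1)^(-1); it acts on strands j, j+1
   (0-indexed), j : 'I_n.-1. *)
Section Khovanov.
Variables (n : nat) (w : seq ('I_n.-1 * bool)).

(* Points of the closed braid diagram: (level, strand position).
   Level t (0 <= t <= size w) lies between crossing t-1 and crossing t;
   the closure joins level (size w) to level 0. *)
Definition vert := ('I_(size w).+1 * 'I_n)%type.

(* A resolution: false = 0-resolution, true = 1-resolution. *)
Definition res := {ffun 'I_(size w) -> bool}.

Definition letter (t : 'I_(size w)) : 'I_n.-1 * bool := tnth (in_tuple w) t.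

(* The resolution at crossing t is the oriented (braidlike) smoothing:
   0-resolution of a positive, 1-resolution of a negative crossing. *)
Definition oriented (s : res) (t : 'I_(size w)) : bool := s t == ~~ (letter t).2.

Definition edge (s : res) (x y : vert) : bool :=
  [&& (x.1 : nat) == size w, (y.1 : nat) == 0%N & x.2 == y.2]
  || [exists t : 'I_(size w),
       let j : nat := (letter t).1 in
       [&& (x.1 : nat) == t, (y.1 : nat) == t.+1, x.2 == y.2
         & (((x.2 : nat) != j) && ((x.2 : nat) != j.+1)) || oriented s t]
       || [&& ~~ oriented s t, x.1 == y.1,
              ((x.1 : nat) == t) || ((x.1 : nat) == t.+1),
              (x.2 : nat) == j & (y.2 : nat) == j.+1]].

Definition sedge (s : res) : rel vert := fun x y => edge s x y || edge s y x.

Definition circle (s : res) (x : vert) : {set vert} := [set y | connect (sedge s) x y].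
Definition circles (s : res) : {set {set vert}} := [set circle s x | x : vert].

(* A circle is nontrivial iff it winds an odd number of times around the
   braid axis, i.e. it meets the cut at level 0 an odd number of times. *)
Definition nontrivial (C : {set vert}) : bool :=
  odd #|[set p : 'I_n | (ord0, p) \in C]|.

(* Enhanced states: resolution + labelling (true = v_+, false = v_-)
   constant on circles. *)
Definition valid (g : res * {ffun vert -> bool}) : bool :=
  [forall x, forall y, connect (sedge g.1) x y ==> (g.2 x == g.2 y)].

Definition Gen := {g : res * {ffun vert -> bool} | valid g}.

Definition lab (L : {ffun vert -> bool}) (C : {set vert}) : bool := [exists x in C, L x].
Definition sgn (L : {ffun vert -> bool}) (C : {set vert}) : int := if lab L C then 1 else -1.

Definition kgr (g : Gen) : int :=
  \sum_(C in circles (val g).1 | nontrivial C) sgn (val g).2 C.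

(* Coefficient of g' in d g (Khovanov's merge/split maps over Z/2):
   s' is obtained from s by changing one 0 to 1, the labels agree on the
   circles not touching that crossing, and on the touched circles
   (#v_+ - #v_-) decreases by exactly one. *)
Definition coef (g g' : Gen) : bool :=
  let s := (val g).1 in let L := (val g).2 in
  let s' := (val g').1 in let L' := (val g').2 in
  [&& [exists t, ~~ s t && [forall u, s' u == (u == t) || s u]],
      [forall C in circles s :&: circles s', lab L C == lab L' C]
    & \sum_(C in circles s' :\: circles s) sgn L' C
        == \sum_(C in circles s :\: circles s') sgn L C - 1].

Definition chain := {ffun Gen -> 'F_2}.

Definition dKh (f : chain) : chain :=
  [ffun g' => \sum_(g : Gen) f g * (if coef g g' then 1 else 0)].

Definition filt (i : int) (y : chain) : bool :=
  [forall g, (y g != 0) ==> (kgr g <= i)].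

Definition braidlike : res := [ffun t => ~~ (letter t).2].

Definition psi : chain :=
  [ffun g => if val g == (braidlike, [ffun _ => false]) then 1 else 0].

(* kappa_is m  <->  kappa(beta) = m  (None = infinity):
   kappa = n + min { i | psi = d y, y in F_i }. *)
Definition kappa_is (m : option int) : Prop :=
  match m with
  | Some v => (exists y, filt (v - n%:Z) y /\ dKh y = psi)
              /\ forall (i : int) y, filt i y -> dKh y = psi -> v - n%:Z <= i
  | None => forall y, dKh y <> psi
  end.

End Khovanov.

(* Let t be a crossing labelled sigma_j^-1 and let y be the generator whose
   resolution is the braidlike one with t switched to its 0-resolution, all
   circles labelled v_-.  There, strands j and j+1 are joined into a single
   trivial circle while the other n-2 strands stay nontrivial, so k(y) = 2-n.
   Resolving t splits that circle into the two v_- circles of psi; resolving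
   any other 0-resolved crossing (necessarily some sigma_i, i <> j) would merge
   two distinct circles, which the differential cannot do from an all-v_-
   state.  Hence d y = psi.  Conversely, if d y = psi then some generator of
   y sits one negative crossing away from the braidlike resolution, and such
   a resolution has at most n-2 nontrivial circles, so y is not in any
   F_i with i < 2-n.  Thus kappa = n + (2-n) = 2. *)
From mathcomp Require Import all_boot all_order all_algebra.
From mathcomp Require Import zify.
Set Implicit Arguments.
Unset Strict Implicit.
Unset Printing Implicit Defensive.
Import Order.TTheory GRing.Theory Num.Theory.

Lemma connect_invariant (T : finType) (U : eqType) (e : rel T) (f : T -> U) :
  (forall x y, e x y -> f x = f y) -> forall x y, connect e x y -> f x = f y.
Proof.
move=> fe x _ /connectP[p + ->].
by elim: p x => //= z p IHp x /andP[/fe -> /IHp].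
Qed.

Lemma connect_sub_along (T : finType) (e e' : rel T) x :
  (forall z z', connect e x z -> connect e' x z -> e z z' -> e' z z') ->
  forall y, connect e x y -> connect e' x y.
Proof.
move=> ee' y /connectP[p + ->]; elim/last_ind: p => //= p z IHp.
rewrite rcons_path last_rcons => /andP[ep ez].
have ex : connect e x (last x p) by apply/connectP; exists p.
have e'x := IHp ep.
exact: connect_trans e'x (connect1 (ee' _ _ ex e'x ez)).
Qed.

(* When only a crossing on strands [c], [c.+1] leaves the braidlike
   resolution, circles are read off level 0 through [glue c]. *)
Definition glue (c q : nat) : nat := if q == c.+1 then c else q.

Section Diagram.
Variables (n : nat) (w : seq ('I_n.-1 * bool)).

Lemma ltn_strand_lo (c : 'I_n.-1) : (c : nat) < n.
Proof. by case: n c => [[]|m] c //=; apply: ltnW; apply: ltn_ord. Qed.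

Lemma ltn_strand_hi (c : 'I_n.-1) : c.+1 < n.
Proof. by case: n c => [[]|m] c //=; apply: ltn_ord. Qed.

Definition strand_lo (c : 'I_n.-1) : 'I_n := Ordinal (ltn_strand_lo c).
Definition strand_hi (c : 'I_n.-1) : 'I_n := Ordinal (ltn_strand_hi c).

Definition on_strands (c : 'I_n.-1) (q : 'I_n) : bool :=
  (q == strand_lo c) || (q == strand_hi c).

Lemma strand_lo_neq_hi (c : 'I_n.-1) : strand_lo c != strand_hi c.
Proof. by rewrite -val_eqE /= eqn_leq ltnn andbF. Qed.

Lemma on_strandsP (c : 'I_n.-1) (q : 'I_n) :
  on_strands c q -> q = strand_lo c \/ q = strand_hi c.
Proof. by case/orP => /eqP ->; [left | right]. Qed.

Lemma eq_glue (c : 'I_n.-1) (a b : 'I_n) : (glue c a == glue c b) =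
  (a == b) || (on_strands c a && on_strands c b).
Proof.
rewrite /on_strands -!val_eqE /= /glue.
move: (a : nat) (b : nat) (c : nat) => {}a {}b {}c.
case: (a =P c.+1) => [->|Ha]; case: (b =P c.+1) => [->|Hb];
  repeat (case: eqP => ? /=); lia.
Qed.

Lemma on_strands_lo_hi (c c' : 'I_n.-1) :
  on_strands c (strand_lo c') -> on_strands c (strand_hi c') -> c' = c.
Proof.
rewrite /on_strands -!val_eqE /= => Hlo Hhi; apply: val_inj => /=.
by move: Hlo Hhi; move: (c : nat) (c' : nat) => a b; repeat case: eqP; lia.
Qed.

Lemma card_off_strands (c : 'I_n.-1) : (#|[set q | ~~ on_strands c q]| + 2)%N = n.
Proof.
have -> : [set q | ~~ on_strands c q] = ~: [set strand_lo c; strand_hi c].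
  by apply/setP => q; rewrite !inE.
have := cardsC [set strand_lo c; strand_hi c].
by rewrite cards2 strand_lo_neq_hi card_ord addnC.
Qed.

Lemma letterP x : x \in w -> exists t : 'I_(size w), letter t = x.
Proof.
move=> Hx; have Hi : index x w < size w by rewrite index_mem.
by exists (Ordinal Hi); rewrite /letter (tnth_nth x) /= nth_index.
Qed.

Lemma mem_letter (t : 'I_(size w)) : letter t \in w.
Proof. exact: mem_tnth. Qed.

Lemma sedge_sym (s : res w) : symmetric (sedge s).
Proof. by move=> x y; rewrite /sedge orbC. Qed.

Lemma connect_sedgeC (s : res w) x y :
  connect (sedge s) x y = connect (sedge s) y x.
Proof. exact: (sym_connect_sym (@sedge_sym s)). Qed.

Lemma edge_strand (s : res w) (x y : vert w) : edge s x y ->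
  (x.2 == y.2) || [exists t, ~~ oriented s t && ((x.2 : nat) == (letter t).1)
                                 && ((y.2 : nat) == (letter t).1.+1)].
Proof.
rewrite /edge => /orP[/and3P[_ _ ->]//|/existsP[t]].
case/orP => [/and4P[_ _ -> _]//|/and5P[H _ _ H1 H2]].
by apply/orP; right; apply/existsP; exists t; rewrite H H1 H2.
Qed.

Lemma sedge_glue (s : res w) (u : 'I_(size w)) :
  (forall t : 'I_(size w), (t : nat) != u -> oriented s t) ->
  forall x y, sedge s x y ->
  glue (letter u).1 x.2 = glue (letter u).1 y.2.
Proof.
move=> Ho x y /orP[] /edge_strand /orP[/eqP->//|/existsP[t /andP[/andP[Ht H1] H2]]];
  have Htu : t = u by (apply/eqP; apply: contraNT Ht => /Ho).
all: subst t; rewrite /glue (eqP H1) (eqP H2) eqxx; case: eqP => //; lia.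
Qed.

Lemma connect_vertical (s : res w) q a b : a <= b <= size w ->
  (forall t : 'I_(size w), a <= t < b -> oriented s t) ->
  connect (sedge s) (inord a, q) (inord b, q).
Proof.
elim: b => [|b IH] /andP[Hab Hb] Ho; first by have -> : a = 0 by lia.
case: (ltnP b a) => Hba; first by have -> : a = b.+1 by lia.
apply: connect_trans (IH _ _) _; first by rewrite Hba /=; lia.
  by move=> t /andP[H1 H2]; apply: Ho; rewrite H1 /=; lia.
apply: connect1; apply/orP; left; apply/orP; right; apply/existsP.
have Hbw : b < size w by lia.
exists (Ordinal Hbw); apply/orP; left => /=.
rewrite !inordK ?eqxx //=; last by lia.
by rewrite Ho ?orbT //= leqnn andbT.
Qed.

Lemma sedge_closure (s : res w) q : sedge s (inord (size w), q) (inord 0, q).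
Proof. by apply/orP; left; apply/orP; left; rewrite /= !inordK ?eqxx. Qed.

(* A vertex below crossing [u] goes straight down; one above it goes up and
   around through the closure. *)
Lemma connect_level0 (s : res w) (u : nat) :
  (forall t : 'I_(size w), (t : nat) != u -> oriented s t) ->
  forall x : vert w, connect (sedge s) x (ord0, x.2).
Proof.
move=> Ho [l q] /=.
have -> : (ord0 : 'I_(size w).+1) = inord 0 by apply: val_inj; rewrite /= inordK.
rewrite -[l]inord_val.
case: (leqP l u) => Hlu.
  rewrite connect_sedgeC; apply: connect_vertical.
    by rewrite /=; have := ltn_ord l; lia.
  by move=> t /andP[_ Ht]; apply: Ho; apply/eqP; lia.
apply: connect_trans (connect_vertical _ _ _) (connect1 (sedge_closure _ _)).
  by rewrite leqnn andbT; have := ltn_ord l; lia.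
by move=> t /andP[Ht _]; apply: Ho; apply/eqP; lia.
Qed.

Lemma sedge_unoriented (s : res w) (t : 'I_(size w)) : ~~ oriented s t ->
  sedge s (inord t, strand_lo (letter t).1) (inord t, strand_hi (letter t).1) &&
  sedge s (inord t.+1, strand_lo (letter t).1) (inord t.+1, strand_hi (letter t).1).
Proof.
move=> Ht; apply/andP; split; apply/orP; left; apply/orP; right; apply/existsP;
 exists t; apply/orP; right => /=; rewrite Ht !eqxx /= ?andbT ?orbT;
 rewrite inordK ?eqxx ?orbT //; have := ltn_ord t; lia.
Qed.

Lemma mem_circle (s : res w) x : x \in circle s x.
Proof. by rewrite inE connect0. Qed.

Lemma circle_eq (s : res w) x y : y \in circle s x -> circle s y = circle s x.
Proof.
rewrite inE => Hxy; apply/setP => z; rewrite !inE; apply/idP/idP => H.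
  exact: connect_trans Hxy H.
by rewrite connect_sedgeC in Hxy; apply: connect_trans Hxy H.
Qed.

Lemma circles_eq_circle (s : res w) (C : {set vert w}) x :
  C \in circles s -> x \in C -> C = circle s x.
Proof. by case/imsetP => y _ -> Hx; rewrite (circle_eq Hx). Qed.

Lemma notin_circles_disconnected (s : res w) (C : {set vert w}) a b :
  a \in C -> b \in C -> ~~ connect (sedge s) a b -> C \notin circles s.
Proof.
move=> Ha Hb Hn; apply/negP => HC; move: Hb.
by rewrite (circles_eq_circle HC Ha) inE; apply/negP.
Qed.

Lemma notin_circles_escape (s : res w) (C : {set vert w}) a b :
  a \in C -> b \notin C -> connect (sedge s) a b -> C \notin circles s.
Proof.
move=> Ha Hb Hc; apply/negP => HC; move: Hb.
by rewrite (circles_eq_circle HC Ha) inE Hc.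
Qed.

Definition braidlike0 (u : 'I_(size w)) : res w :=
  [ffun v => if v == u then false else braidlike w v].

Lemma oriented_braidlike t : oriented (braidlike w) t.
Proof. by rewrite /oriented ffunE. Qed.

Lemma oriented_braidlike0 (u t : 'I_(size w)) : t != u -> oriented (braidlike0 u) t.
Proof. by move=> H; rewrite /oriented !ffunE (negbTE H). Qed.

Lemma unoriented_braidlike0 u : (letter u).2 = false -> ~~ oriented (braidlike0 u) u.
Proof. by move=> H; rewrite /oriented !ffunE eqxx H. Qed.

Lemma sedge_braidlike x y : sedge (braidlike w) x y -> x.2 = y.2.
Proof.
move=> /orP[] /edge_strand /orP[/eqP->//|/existsP[t /andP[/andP[Ht _] _]]];
  by rewrite oriented_braidlike in Ht.
Qed.

Lemma mem_circle_braidlike x y : (y \in circle (braidlike w) x) = (y.2 == x.2).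
Proof.
have Ho (t : 'I_(size w)) : (t : nat) != size w -> oriented (braidlike w) t.
  by move=> _; apply: oriented_braidlike.
rewrite inE; apply/idP/eqP => [/(connect_invariant sedge_braidlike) //|Hy].
rewrite connect_sedgeC; apply: connect_trans (connect_level0 Ho y) _.
by rewrite Hy connect_sedgeC; apply: connect_level0 Ho x.
Qed.

Lemma mem_circle_braidlike0 u x y : (letter u).2 = false ->
  (y \in circle (braidlike0 u) x) =
  (glue (letter u).1 y.2 == glue (letter u).1 x.2).
Proof.
move=> Hu.
have Ho (t : 'I_(size w)) : (t : nat) != u -> oriented (braidlike0 u) t.
  exact: oriented_braidlike0.
have down z := connect_level0 Ho z.
have up z : connect (sedge (braidlike0 u)) (ord0, z.2) z.
  by rewrite connect_sedgeC.
have to_lo (a : 'I_n) : on_strands (letter u).1 a ->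
    connect (sedge (braidlike0 u)) (ord0, a) (ord0, strand_lo (letter u).1).
  case/on_strandsP => ->{a} //.
  case/andP: (sedge_unoriented (unoriented_braidlike0 Hu)) => Hlohi _.
  rewrite connect_sedgeC; apply: connect_trans (down (inord u, strand_hi (letter u).1)).
  exact: connect_trans (up (inord u, strand_lo (letter u).1)) (connect1 Hlohi).
rewrite inE; apply/idP/eqP => [/(connect_invariant (sedge_glue Ho)) /= -> //|].
move/eqP; rewrite eq_glue => /orP[/eqP Hyx|/andP[Hy Hx]].
  by apply: connect_trans (down x) _; rewrite -Hyx; apply: up.
apply: connect_trans (down x) (connect_trans (to_lo _ Hx) _).
by rewrite connect_sedgeC; apply: connect_trans (down y) (to_lo _ Hy).
Qed.

Definition near_crossing (p : 'I_(size w)) : pred (vert w) := fun z =>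
  (((z.1 : nat) == p) || ((z.1 : nat) == p.+1)) &&
  (((z.2 : nat) == (letter p).1) || ((z.2 : nat) == (letter p).1.+1)).

Lemma edge_agree (s s' : res w) p x y : (forall v, v != p -> s v = s' v) ->
  ~~ near_crossing p x -> edge s x y = edge s' x y /\ edge s y x = edge s' y x.
Proof.
move=> Hs HQ; rewrite /edge; split; congr (_ || _); apply: eq_existsb => t /=;
(case: (eqVneq t p) => [->{t}|Htp]; last by rewrite /oriented Hs).
all: move: HQ; rewrite /near_crossing; set c := ((letter p).1 : nat).
all: case: (oriented s p); case: (oriented s' p) => //=.
all: rewrite -?[x.2 == y.2]/((x.2:nat) == y.2) -?[y.2 == x.2]/((y.2:nat) == x.2).
all: rewrite -?[x.1 == y.1]/((x.1:nat) == y.1) -?[y.1 == x.1]/((y.1:nat) == x.1).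
all: move: (x.1 : nat) (y.1 : nat) (x.2 : nat) (y.2 : nat) (p : nat) c => a b d e q k.
all: rewrite !orbF !orbT !andbT.
all: repeat (case: eqP => //= ?); lia.
Qed.

Lemma sedge_agree (s s' : res w) p x y : (forall v, v != p -> s v = s' v) ->
  ~~ near_crossing p x -> sedge s x y = sedge s' x y.
Proof.
by move=> Hs HQ; case: (edge_agree y Hs HQ) => E1 E2; rewrite /sedge E1 E2.
Qed.

Lemma circle_local (s s' : res w) p x : (forall v, v != p -> s v = s' v) ->
  (forall z, z \in circle s' x -> ~~ near_crossing p z) ->
  circle s' x = circle s x.
Proof.
move=> Hs Hfar; apply/setP => y; rewrite !inE; apply/idP/idP;
  by apply: connect_sub_along => z z' Hz Hz'; rewrite (sedge_agree _ Hs (Hfar z _)) // inE.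
Qed.

Lemma near_crossing_circle (s : res w) v z : ~~ oriented s v ->
  near_crossing v z ->
  circle s z = circle s (inord v, strand_lo (letter v).1) \/
  circle s z = circle s (inord v.+1, strand_lo (letter v).1).
Proof.
move=> Hv; case/andP: (sedge_unoriented Hv) => H1 H2.
case: z => l q /andP[Hl Hq]; set c := (letter v).1.
have [->|->] : q = strand_lo c \/ q = strand_hi c.
  by apply: on_strandsP; rewrite /on_strands -!val_eqE.
all: have [->|->] : l = inord v \/ l = inord v.+1 by
  case/orP: Hl => /eqP E; [left|right]; apply: val_inj; rewrite /= inordK // -E ltn_ord.
- by left.
- by right.
- by left; apply: circle_eq; rewrite inE; apply: connect1.
- by right; apply: circle_eq; rewrite inE; apply: connect1.
Qed.

Lemma card_new_circles_le2 (s s' : res w) v :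
  (forall v', v' != v -> s v' = s' v') -> ~~ oriented s' v ->
  #|circles s' :\: circles s| <= 2.
Proof.
move=> Hs Hv.
set a0 := (inord v, strand_lo (letter v).1) : vert w.
set a1 := (inord v.+1, strand_lo (letter v).1) : vert w.
apply: leq_trans (_ : #|[set circle s' a0; circle s' a1]| <= 2); last first.
  by rewrite cards2; case: (_ != _).
apply: subset_leq_card; apply/subsetP => C; rewrite inE.
case/andP => HC /imsetP[x _ EC].
case: (boolP [exists z in C, near_crossing v z]) => [|Hfar].
  case/existsP => z /andP[zC Hz].
  have -> : C = circle s' z by rewrite EC (circle_eq (x := x)) // -EC.
  by rewrite !inE; case: (near_crossing_circle Hv Hz) => ->; rewrite eqxx ?orbT.
move: HC; rewrite EC (circle_local (x := x) Hs) ?imset_f // => z Hz.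
by apply: contra Hfar => Hnear; apply/existsP; exists z; rewrite EC Hz.
Qed.

Lemma card_lost_circles_ge2 (s s' : res w) a b :
  connect (sedge s') a b -> b \notin circle s a ->
  2 <= #|circles s :\: circles s'|.
Proof.
move=> Hab Hb.
have Ha : a \notin circle s b.
  by apply: contra Hb; rewrite !inE connect_sedgeC.
have lost x y : connect (sedge s') x y -> y \notin circle s x ->
    circle s x \in circles s :\: circles s'.
  move=> Hxy Hy; rewrite inE imset_f // andbT.
  exact: notin_circles_escape (mem_circle s x) Hy Hxy.
have -> : 2 = #|[set circle s a; circle s b]|.
  by rewrite cards2; case: eqP => // E; move: Hb; rewrite E mem_circle.
apply: subset_leq_card; apply/subsetP => C /set2P[] ->; first exact: lost Hab Hb.
by apply: lost Ha; rewrite connect_sedgeC.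
Qed.

End Diagram.

Section Grading.
Variables (n : nat) (w : seq ('I_n.-1 * bool)).
Local Open Scope ring_scope.

Local Notation B := (braidlike w).

Lemma valid_allminus (s : res w) : valid (s, [ffun _ : vert w => false]).
Proof. by apply/forallP => x; apply/forallP => y; rewrite !ffunE eqxx implybT. Qed.

Definition allminus (s : res w) : Gen w :=
  exist _ (s, [ffun _ : vert w => false]) (valid_allminus s).

Definition nontrivial_circles (s : res w) : {set {set vert w}} :=
  [set C in circles s | nontrivial C].

Lemma lab_allminus C : lab [ffun _ : vert w => false] C = false.
Proof. by apply/existsP => -[x /andP[_]]; rewrite ffunE. Qed.

Lemma sum_sgn_ge (L : {ffun vert w -> bool}) (S : {set {set vert w}}) :
  - (#|S|%:Z) <= \sum_(C in S) sgn L C.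
Proof.
have -> : - (#|S|%:Z) = \sum_(C in S) (-1 : int) by rewrite sumr_const mulNrn natz.
by apply: ler_sum => C _; rewrite /sgn; case: lab.
Qed.

Lemma sum_sgn_allminus (S : {set {set vert w}}) :
  \sum_(C in S) sgn [ffun _ : vert w => false] C = - (#|S|%:Z).
Proof.
rewrite (eq_bigr (fun _ => -1)) ?sumr_const ?mulNrn ?natz // => C _.
by rewrite /sgn lab_allminus.
Qed.

Lemma sum_sgn_min_lab (L : {ffun vert w -> bool}) (S : {set {set vert w}}) :
  \sum_(C in S) sgn L C = - (#|S|%:Z) -> forall C, C \in S -> lab L C = false.
Proof.
move=> Hsum C CS.
have Hge C' : C' \in S -> 0 <= sgn L C' + 1 by rewrite /sgn; case: lab.
have H0 : \sum_(C' in S) (sgn L C' + 1) = 0.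
  by rewrite big_split /= Hsum sumr_const natz addNr.
by have := psumr_eq0P Hge H0 CS; rewrite /sgn; case: lab.
Qed.

Lemma kgr_ge (g : Gen w) : - (#|nontrivial_circles (val g).1|%:Z) <= kgr g.
Proof.
rewrite /kgr (eq_bigl (fun C => C \in nontrivial_circles (val g).1)) ?sum_sgn_ge //.
by move=> C; rewrite inE.
Qed.

Lemma kgr_allminus (s : res w) : kgr (allminus s) = - (#|nontrivial_circles s|%:Z).
Proof.
rewrite /kgr (eq_bigl (fun C => C \in nontrivial_circles s)) ?sum_sgn_allminus //.
by move=> C; rewrite inE.
Qed.

Lemma coef_flip (g g' : Gen w) : coef g g' ->
  exists2 u, ~~ (val g).1 u & (val g').1 = [ffun v => (v == u) || (val g).1 v].
Proof.
case/and3P => /existsP[u /andP[Hu /forallP Hs']] _ _.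
by exists u => //; apply/ffunP => v; rewrite ffunE; apply/eqP.
Qed.

Lemma coef_to_braidlike (g : Gen w) : coef g (allminus B) ->
  exists2 u, (letter u).2 = false & (val g).1 = braidlike0 u.
Proof.
case/coef_flip => u Hu /= /ffunP EB; exists u.
  by have := EB u; rewrite !ffunE eqxx; case: (letter u).2.
apply/ffunP => v; have := EB v; rewrite !ffunE.
by case: (v =P u) => [->|_ ->] //; rewrite (negbTE Hu).
Qed.

End Grading.

Section ChangedCrossing.
Variables (n : nat) (w : seq ('I_n.-1 * bool)) (u : 'I_(size w)).
Hypothesis Hu : (letter u).2 = false.
Local Open Scope ring_scope.

Local Notation c := (letter u).1.
Local Notation B := (braidlike w).
Local Notation B0 := (braidlike0 u).

Lemma circle_braidlike0_off x : ~~ on_strands c x.2 -> circle B0 x = circle B x.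
Proof.
move=> Hx; apply/setP => y.
by rewrite mem_circle_braidlike0 // mem_circle_braidlike eq_glue (negbTE Hx) andbF orbF.
Qed.

Lemma connect_braidlike0_lo_hi :
  connect (sedge B0) (ord0, strand_lo c) (ord0, strand_hi c).
Proof.
have : (ord0, strand_hi c) \in circle B0 (ord0, strand_lo c).
  by rewrite mem_circle_braidlike0 // eq_glue /on_strands !eqxx !orbT.
by rewrite inE.
Qed.

Lemma circles_braidlike_lost : circles B :\: circles B0 =
  [set circle B (ord0, strand_lo c); circle B (ord0, strand_hi c)].
Proof.
have Hlohi := connect_braidlike0_lo_hi.
apply/setP => C; rewrite !inE; apply/idP/idP.
  case/andP => HC /imsetP[x _ EC]; rewrite EC in HC *.
  case: (boolP (on_strands c x.2)) => Hx; last first.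
    by move: HC; rewrite -circle_braidlike0_off // imset_f.
  case/on_strandsP: Hx => Ex; apply/orP; [left|right]; apply/eqP/setP => y;
    by rewrite !mem_circle_braidlike Ex.
case/orP => /eqP ->; rewrite imset_f // andbT.
  apply: notin_circles_escape (mem_circle _ _) _ Hlohi.
  by rewrite mem_circle_braidlike /= eq_sym strand_lo_neq_hi.
rewrite connect_sedgeC in Hlohi; apply: notin_circles_escape (mem_circle _ _) _ Hlohi.
by rewrite mem_circle_braidlike /= strand_lo_neq_hi.
Qed.

Lemma circles_braidlike0_new :
  circles B0 :\: circles B = [set circle B0 (ord0, strand_lo c)].
Proof.
apply/setP => C; rewrite !inE; apply/idP/idP.
  case/andP => HC /imsetP[x _ EC]; rewrite EC in HC *.
  case: (boolP (on_strands c x.2)) => Hx; last first.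
    by move: HC; rewrite circle_braidlike0_off // imset_f.
  apply/eqP/setP => y; rewrite !mem_circle_braidlike0 // !eq_glue.
  case/on_strandsP: Hx => ->; rewrite /on_strands !eqxx ?orbT /=;
    by do 2 case: (y.2 == _).
move/eqP ->; rewrite imset_f // andbT.
apply: (@notin_circles_disconnected _ _ _ _ (ord0, strand_lo c) (ord0, strand_hi c)).
- exact: mem_circle.
- by rewrite inE connect_braidlike0_lo_hi.
- have : (ord0, strand_hi c) \notin circle B (ord0, strand_lo c).
    by rewrite mem_circle_braidlike /= eq_sym strand_lo_neq_hi.
  by rewrite inE.
Qed.

Lemma card_braidlike_lost : #|circles B :\: circles B0| = 2%N.
Proof.
rewrite circles_braidlike_lost cards2; case: eqP => // E.
have := mem_circle B (ord0, strand_hi c); rewrite -E mem_circle_braidlike /=.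
by rewrite eq_sym (negbTE (strand_lo_neq_hi c)).
Qed.

Lemma card_braidlike0_new : #|circles B0 :\: circles B| = 1%N.
Proof. by rewrite circles_braidlike0_new cards1. Qed.

Lemma level0_circle_braidlike0 x :
  [set p | (ord0, p) \in circle B0 x] =
  if on_strands c x.2 then [set strand_lo c; strand_hi c] else [set x.2].
Proof.
apply/setP => p; rewrite inE mem_circle_braidlike0 // eq_glue /=.
case: ifP => Hx; rewrite ?andbT ?andbF ?orbF !inE //.
by case/on_strandsP: Hx => ->; rewrite /on_strands; do 2 case: (p == _).
Qed.

Lemma nontrivial_circle_braidlike0 x :
  nontrivial (circle B0 x) = ~~ on_strands c x.2.
Proof.
rewrite /nontrivial level0_circle_braidlike0; case: ifP => _.
  by rewrite cards2 strand_lo_neq_hi.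
by rewrite cards1.
Qed.

Lemma card_nontrivial_braidlike0 : (#|nontrivial_circles B0| + 2)%N = n.
Proof.
have -> : nontrivial_circles B0 =
    [set circle B0 (ord0, q) | q in [set q | ~~ on_strands c q]].
  apply/setP => C; apply/idP/imsetP.
    rewrite inE => /andP[/imsetP[x _ ->]]; rewrite nontrivial_circle_braidlike0 => Hx.
    exists x.2; first by rewrite inE.
    by apply: circle_eq; rewrite mem_circle_braidlike0 //= eqxx.
  case=> q; rewrite inE => Hq ->.
  by rewrite inE imset_f //= nontrivial_circle_braidlike0.
rewrite card_in_imset ?card_off_strands // => q1 q2; rewrite !inE => Hq1 _ E.
have := mem_circle B0 (ord0, q1); rewrite E mem_circle_braidlike0 // eq_glue /=.
by rewrite (negbTE Hq1) /= orbF => /eqP.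
Qed.

Lemma kgr_allminus_braidlike0 : kgr (allminus B0) = 2%:Z - n%:Z.
Proof.
rewrite kgr_allminus -[n in RHS]card_nontrivial_braidlike0.
by move: #|_| => k; lia.
Qed.

Lemma kgr_braidlike0_ge (g : Gen w) : (val g).1 = B0 -> 2%:Z - n%:Z <= kgr g.
Proof.
move=> Eg; apply: le_trans (kgr_ge g); rewrite Eg.
rewrite -[n in _ - n%:Z]card_nontrivial_braidlike0.
by move: #|_| => k; lia.
Qed.

Lemma coef_braidlike0 : coef (allminus B0) (allminus B).
Proof.
apply/and3P; split => /=.
- apply/existsP; exists u; rewrite ffunE eqxx /=; apply/forallP => v.
  by rewrite !ffunE; case: (v =P u) => [->|_] //=; rewrite Hu.
- by apply/forallP => C; apply/implyP.
- by rewrite !sum_sgn_allminus card_braidlike0_new card_braidlike_lost.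
Qed.

Lemma coef_braidlike0_allminus (g' : Gen w) :
  coef (allminus B0) g' -> (val g').1 = B -> (val g').2 = [ffun _ => false].
Proof.
case: g' => [[s' L'] vg] /= /and3P[_ /forallP Hlab /eqP Hsum] Es'; subst s'.
have Hmin : \sum_(C in circles B :\: circles B0) sgn L' C =
            - (#|circles B :\: circles B0|%:Z).
  by rewrite Hsum sum_sgn_allminus card_braidlike0_new card_braidlike_lost.
apply/ffunP => x; rewrite ffunE; apply/negbTE/negP => Lx.
have HC : circle B x \in circles B by exact: imset_f.
have : lab L' (circle B x) by apply/existsP; exists x; rewrite mem_circle Lx.
case: (boolP (circle B x \in circles B0)) => HC0.
  by have := Hlab (circle B x); rewrite inE HC0 HC /= lab_allminus => /eqP <-.
by rewrite (sum_sgn_min_lab Hmin) // inE HC0 HC.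
Qed.

Section PositiveCrossingsElsewhere.
Hypothesis Hpos_off : forall v : 'I_(size w), (letter v).2 -> (letter v).1 != c.

(* Any other 0-resolved crossing of [B0] is positive, hence away from the
   strands [c], [c.+1]: resolving it destroys two distinct circles and creates
   at most two, so the sign count cannot drop by exactly one. *)
Lemma coef_braidlike0_braidlike (g' : Gen w) :
  coef (allminus B0) g' -> (val g').1 = B.
Proof.
move=> Hco; have [v /= Hv Es'] := coef_flip Hco.
have [Evu|Hvu] := eqVneq v u.
  subst v; rewrite Es'; apply/ffunP => t; rewrite !ffunE.
  by case: (t =P u) => [->|_] //=; rewrite Hu.
exfalso.
have Hv2 : (letter v).2 by move: Hv; rewrite !ffunE (negbTE Hvu); case: (letter v).2.
have Hag v' : v' != v -> B0 v' = (val g').1 v'.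
  by move=> Hv'; rewrite Es' [in RHS]ffunE (negbTE Hv').
have Hor : ~~ oriented (val g').1 v by rewrite /oriented Es' ffunE eqxx Hv2.
have Hnew := card_new_circles_le2 Hag Hor.
case/andP: (sedge_unoriented Hor) => Hedge _.
have Hsplit : (inord v, strand_hi (letter v).1) \notin
              circle B0 (inord v, strand_lo (letter v).1).
  rewrite mem_circle_braidlike0 // eq_glue /= negb_or eq_sym strand_lo_neq_hi /=.
  apply/negP => /andP[Hhi Hlo]; move/negP: (Hpos_off Hv2); apply; apply/eqP.
  exact: on_strands_lo_hi Hlo Hhi.
have Hlost := card_lost_circles_ge2 (connect1 Hedge) Hsplit.
case/and3P: Hco => _ _ /eqP /=; rewrite sum_sgn_allminus => Hsum.
have := sum_sgn_ge (val g').2 (circles (val g').1 :\: circles B0).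
rewrite Hsum; move: Hnew Hlost; move: #|_| #|_| => k l; lia.
Qed.

End PositiveCrossingsElsewhere.

End ChangedCrossing.

Section Boundary.
Variables (n : nat) (w : seq ('I_n.-1 * bool)).
Local Open Scope ring_scope.

Lemma dKh_allminus_braidlike0 (u : 'I_(size w)) : (letter u).2 = false ->
  (forall v : 'I_(size w), (letter v).2 -> (letter v).1 != (letter u).1) ->
  dKh [ffun g => if g == allminus (braidlike0 u) then 1 else 0] = psi w.
Proof.
move=> Hu Hpos_off; apply/ffunP => g'; rewrite !ffunE.
rewrite (bigD1 (allminus (braidlike0 u))) //= ffunE eqxx mul1r big1 ?addr0; last first.
  by move=> g /negbTE Hg; rewrite ffunE Hg mul0r.
case Hc: coef.
  have Es' := coef_braidlike0_braidlike Hu Hpos_off Hc.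
  by rewrite [val g']surjective_pairing Es' (coef_braidlike0_allminus Hu Hc Es') eqxx.
case: eqP => // Eg'.
have Eg : g' = allminus (braidlike w) by apply: val_inj.
by rewrite Eg coef_braidlike0 in Hc.
Qed.

Lemma dKh_psi_coef (y : chain w) : dKh y = psi w ->
  exists2 g, y g != 0 & coef g (allminus (braidlike w)).
Proof.
move/(congr1 (fun f : chain w => f (allminus (braidlike w)))); rewrite /= !ffunE eqxx.
case: (pickP (fun g => (y g != 0) && coef g (allminus (braidlike w)))).
  by move=> g /andP[yg Hg] _; exists g.
move=> Hnone; rewrite big1 => [/esym/eqP|g _]; first by rewrite oner_eq0.
by move: (Hnone g); case: eqP => [->|_ /= ->]; rewrite ?mul0r ?mulr0.
Qed.

End Boundary.

Local Open Scope ring_scope.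

Theorem mainTheorem7 (n : nat) (w : seq ('I_n.-1 * bool)) (j : 'I_n.-1)
  (Hneg : (j, false) \in w) (Hpos : (j, true) \notin w) :
  kappa_is w (Some (2%:Z)%R).
Proof.
have [t Ht] := letterP Hneg.
have Ht2 : (letter t).2 = false by rewrite Ht.
have Hpos_off (v : 'I_(size w)) : (letter v).2 -> (letter v).1 != (letter t).1.
  move=> Hv; apply: contra Hpos; rewrite Ht /= => /eqP Ev.
  have <- : letter v = (j, true) by rewrite [letter v]surjective_pairing Ev Hv.
  exact: mem_letter.
split.
  exists [ffun g => if g == allminus (braidlike0 t) then 1 else 0].
  split; last exact: dKh_allminus_braidlike0.
  apply/forallP => g; rewrite ffunE.
  by case: (g =P _) => [->|] //=; rewrite kgr_allminus_braidlike0 // lexx implybT.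
move=> i y Hy /dKh_psi_coef[g yg /coef_to_braidlike[u Hu Eg]].
apply: le_trans (kgr_braidlike0_ge Hu Eg) _.
exact: implyP (forallP Hy g) yg.
Qed.
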